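(* Let $n\ge 2$, $1\le r\le n-1$, and let $h(q)=q^n+q^ra_r+q^{r-1}a_{r-1}+\dots+qa_1+a_0$ with $a_0,\dots,a_r\in\mathbb{H}$ and $a_r\neq 0$. Put $\lambda=\big(\max_{0\le j\le r}|a_j|\big)^{1/n}$. Then every zero $q\in\mathbb{H}$ of $h$ satisfies $$|q|\le \lambda+\max\{\lambda^2,\lambda^{r+1}\}.$$
   Context: $\mathbb{H}$ denotes the real quaternions with the Euclidean norm $|q|=\sqrt{q\bar q}$. The polynomial $h$ (whose coefficients of $q^{r+1},\dots,q^{n-1}$ vanish) has coefficients written to the right of the powers and is evaluated at $q\in\mathbb{H}$ by direct substitution, $h(q)=q^n+q^ra_r+\dots+qa_1+a_0$; a zero of $h$ is a $q\in\mathbb{H}$ with $h(q)=0$. *)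

From Stdlib Require Import Reals.
Open Scope R_scope.

Record quat : Type := Quat { re : R; qi : R; qj : R; qk : R }.

Definition qzero : quat := Quat 0 0 0 0.
Definition qone : quat := Quat 1 0 0 0.

Definition qadd (p q : quat) : quat :=
  Quat (re p + re q) (qi p + qi q) (qj p + qj q) (qk p + qk q).

(* Hamilton product (i^2 = j^2 = k^2 = ijk = -1). *)
Definition qmul (p q : quat) : quat :=
  Quat (re p * re q - qi p * qi q - qj p * qj q - qk p * qk q)
       (re p * qi q + qi p * re q + qj p * qk q - qk p * qj q)
       (re p * qj q - qi p * qk q + qj p * re q + qk p * qi q)
       (re p * qk q + qi p * qj q - qj p * qi q + qk p * re q).

Fixpoint qpow (q : quat) (n : nat) : quat :=
  match n with
  | O => qone
  | S m => qmul q (qpow q m)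
  end.

Definition qnorm (q : quat) : R :=
  sqrt (re q * re q + qi q * qi q + qj q * qj q + qk q * qk q).

Fixpoint qlower (a : nat -> quat) (q : quat) (r : nat) : quat :=
  match r with
  | O => qmul (qpow q 0) (a O)
  | S m => qadd (qlower a q m) (qmul (qpow q (S m)) (a (S m)))
  end.

Definition hpoly (n r : nat) (a : nat -> quat) (q : quat) : quat :=
  qadd (qpow q n) (qlower a q r).

Fixpoint maxnorm (a : nat -> quat) (r : nat) : R :=
  match r with
  | O => qnorm (a O)
  | S m => Rmax (maxnorm a m) (qnorm (a (S m)))
  end.

(* lambda = (max_j |a_j|)^(1/n); the max is > 0 under the hypothesis a_r <> 0,
   so Rpower (real exponent of a positive base) is the genuine n-th root. *)
Definition lam (n r : nat) (a : nat -> quat) : R :=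
  Rpower (maxnorm a r) (/ INR n).

(* Since the quaternion norm is multiplicative and subadditive, a zero q of h satisfies
   Cauchy's inequality |q|^n <= M (1 + |q| + ... + |q|^r) with M = max_j |a_j| = lambda^n.
   In the scaled variable t = |q|/lambda this reads t^n <= sum_{j<=r} lambda^j t^j, and
   bounding lambda^j by c = max(lambda, lambda^r) for j >= 1 turns it into
   t^n <= 1 + c (t + ... + t^r); a geometric-series estimate shows this forces t <= 1 + c. *)
From Stdlib Require Import Reals Lra Lia Psatz.
Open Scope R_scope.

Definition qnorm2 (q : quat) : R :=
  re q * re q + qi q * qi q + qj q * qj q + qk q * qk q.

Definition qdot (p q : quat) : R :=
  re p * re q + qi p * qi q + qj p * qj q + qk p * qk q.

Lemma qnorm2_ge0 (q : quat) : 0 <= qnorm2 q.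
Proof. unfold qnorm2; nra. Qed.

Lemma qnorm_ge0 (q : quat) : 0 <= qnorm q.
Proof. apply sqrt_pos. Qed.

Lemma qnorm_mul_self (q : quat) : qnorm q * qnorm q = qnorm2 q.
Proof. apply sqrt_sqrt, qnorm2_ge0. Qed.

Lemma qnorm_eq0 (q : quat) : qnorm q = 0 -> q = qzero.
Proof.
  intros Hq.
  assert (H2 : qnorm2 q = 0) by (apply sqrt_eq_0; [apply qnorm2_ge0 | exact Hq]).
  destruct q as [x y z w]; unfold qnorm2 in H2; simpl in H2.
  unfold qzero; f_equal; nra.
Qed.

(* Euler's four-square identity. *)
Lemma qnorm_mul (p q : quat) : qnorm (qmul p q) = qnorm p * qnorm q.
Proof.
  unfold qnorm; rewrite <- sqrt_mult by (apply qnorm2_ge0).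
  f_equal; destruct p, q; simpl; ring.
Qed.

Lemma qnorm_pow (q : quat) (n : nat) : qnorm (qpow q n) = qnorm q ^ n.
Proof.
  induction n as [|n IH]; simpl.
  - unfold qnorm, qone; simpl.
    replace (1 * 1 + 0 * 0 + 0 * 0 + 0 * 0) with 1 by ring. apply sqrt_1.
  - rewrite qnorm_mul, IH; reflexivity.
Qed.

Lemma qdot_le_qnorm (p q : quat) : qdot p q <= qnorm p * qnorm q.
Proof.
  destruct (Rle_lt_dec (qdot p q) 0) as [Hle | Hpos].
  - pose proof (Rmult_le_pos _ _ (qnorm_ge0 p) (qnorm_ge0 q)); lra.
  - unfold qnorm; rewrite <- sqrt_mult by (apply qnorm2_ge0).
    rewrite <- (sqrt_pow2 (qdot p q)) by lra.
    apply sqrt_le_1_alt.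
    change (qdot p q ^ 2 <= qnorm2 p * qnorm2 q).
    (* Lagrange's identity *)
    assert (Hlagrange : qnorm2 p * qnorm2 q - qdot p q ^ 2 =
      (re p * qi q - qi p * re q) ^ 2 + (re p * qj q - qj p * re q) ^ 2
      + (re p * qk q - qk p * re q) ^ 2 + (qi p * qj q - qj p * qi q) ^ 2
      + (qi p * qk q - qk p * qi q) ^ 2 + (qj p * qk q - qk p * qj q) ^ 2)
      by (unfold qnorm2, qdot; ring).
    assert (0 <= (re p * qi q - qi p * re q) ^ 2 + (re p * qj q - qj p * re q) ^ 2
      + (re p * qk q - qk p * re q) ^ 2 + (qi p * qj q - qj p * qi q) ^ 2
      + (qi p * qk q - qk p * qi q) ^ 2 + (qj p * qk q - qk p * qj q) ^ 2)
      by (repeat apply Rplus_le_le_0_compat; apply pow2_ge_0).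
    lra.
Qed.

Lemma qnorm_add_le (p q : quat) : qnorm (qadd p q) <= qnorm p + qnorm q.
Proof.
  pose proof (qnorm_ge0 p); pose proof (qnorm_ge0 q).
  rewrite <- (sqrt_pow2 (qnorm p + qnorm q)) by lra.
  apply sqrt_le_1_alt.
  assert (Hexpand : qnorm2 (qadd p q) = qnorm2 p + 2 * qdot p q + qnorm2 q)
    by (destruct p, q; unfold qnorm2, qdot; simpl; ring).
  change (qnorm2 (qadd p q) <= (qnorm p + qnorm q) ^ 2).
  rewrite Hexpand.
  replace ((qnorm p + qnorm q) ^ 2)
    with (qnorm p * qnorm p + 2 * (qnorm p * qnorm q) + qnorm q * qnorm q) by ring.
  rewrite !qnorm_mul_self.
  pose proof (qdot_le_qnorm p q); lra.
Qed.

Lemma qnorm_eq_of_qadd_eq0 (p q : quat) : qadd p q = qzero -> qnorm p = qnorm q.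
Proof.
  destruct p as [x1 y1 z1 w1], q as [x2 y2 z2 w2]; unfold qadd, qzero; simpl.
  intros Hsum; injection Hsum; intros.
  replace x1 with (- x2) by lra; replace y1 with (- y2) by lra.
  replace z1 with (- z2) by lra; replace w1 with (- w2) by lra.
  unfold qnorm; simpl; f_equal; ring.
Qed.

Lemma qnorm_le_maxnorm (a : nat -> quat) (r j : nat) :
  (j <= r)%nat -> qnorm (a j) <= maxnorm a r.
Proof.
  induction r as [|r IH]; intros Hj; simpl.
  - replace j with 0%nat by lia; lra.
  - destruct (Nat.eq_dec j (S r)) as [-> | Hne].
    + apply Rmax_r.
    + eapply Rle_trans; [apply IH; lia | apply Rmax_l].
Qed.

Lemma maxnorm_gt0 (a : nat -> quat) (r : nat) : a r <> qzero -> 0 < maxnorm a r.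
Proof.
  intros Har.
  assert (Hnz : qnorm (a r) <> 0) by (intros H0; apply Har, qnorm_eq0, H0).
  pose proof (qnorm_ge0 (a r)); pose proof (qnorm_le_maxnorm a r r (le_n r)); lra.
Qed.

Lemma qlower_norm_le (a : nat -> quat) (q : quat) (r : nat) :
  qnorm (qlower a q r) <= maxnorm a r * sum_f_R0 (fun j => qnorm q ^ j) r.
Proof.
  apply Rle_trans with (sum_f_R0 (fun j => qnorm q ^ j * qnorm (a j)) r).
  - induction r as [|r IH]; cbn [qlower sum_f_R0].
    + rewrite qnorm_mul, qnorm_pow; lra.
    + eapply Rle_trans; [apply qnorm_add_le|].
      rewrite qnorm_mul, qnorm_pow; lra.
  - rewrite scal_sum.
    apply sum_Rle; intros j Hj.
    apply Rmult_le_compat_l; [apply pow_le, qnorm_ge0 | apply qnorm_le_maxnorm; exact Hj].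
Qed.

Lemma hpoly_root_norm_le (n r : nat) (a : nat -> quat) (q : quat) :
  hpoly n r a q = qzero ->
  qnorm q ^ n <= maxnorm a r * sum_f_R0 (fun j => qnorm q ^ j) r.
Proof.
  intros Hq.
  rewrite <- qnorm_pow, (qnorm_eq_of_qadd_eq0 _ _ Hq).
  apply qlower_norm_le.
Qed.

Lemma lam_gt0 (n r : nat) (a : nat -> quat) : 0 < lam n r a.
Proof. apply exp_pos. Qed.

Lemma lam_pow (n r : nat) (a : nat -> quat) :
  (0 < n)%nat -> 0 < maxnorm a r -> lam n r a ^ n = maxnorm a r.
Proof.
  intros Hn HM; unfold lam.
  rewrite <- Rpower_pow by (apply exp_pos).
  rewrite Rpower_mult, Rinv_l by (apply not_0_INR; lia).
  apply Rpower_1, HM.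
Qed.

Lemma pow_le_Rmax_first_last (l : R) (r j : nat) :
  0 < l -> (1 <= j <= r)%nat -> l ^ j <= Rmax l (l ^ r).
Proof.
  intros Hl Hj; destruct (Rle_dec l 1) as [Hl1 | Hl1].
  - eapply Rle_trans; [|apply Rmax_l].
    destruct j as [|j]; [lia|]; simpl.
    apply Rle_trans with (l * 1); [|lra].
    apply Rmult_le_compat_l; [lra|].
    rewrite <- (pow1 j); apply pow_incr; lra.
  - eapply Rle_trans; [|apply Rmax_r].
    apply Rle_pow; [lra | lia].
Qed.

Lemma sum_scaled_pow_le (l t c : R) (r : nat) : 0 <= t ->
  (forall j, (1 <= j <= r)%nat -> l ^ j <= c) ->
  sum_f_R0 (fun j => l ^ j * t ^ j) r <= 1 + c * (sum_f_R0 (fun j => t ^ j) r - 1).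
Proof.
  intros Ht Hc; induction r as [|r IH]; simpl.
  - lra.
  - assert (IHr : sum_f_R0 (fun j => l ^ j * t ^ j) r
                  <= 1 + c * (sum_f_R0 (fun j => t ^ j) r - 1))
      by (apply IH; intros j Hj; apply Hc; lia).
    assert (HcS : l * l ^ r <= c) by (apply (Hc (S r)); lia).
    assert (0 <= t * t ^ r) by (apply Rmult_le_pos; [lra | apply pow_le; lra]).
    nra.
Qed.

Lemma geometric_sum_tail (t : R) (r : nat) :
  (t - 1) * (sum_f_R0 (fun j => t ^ j) r - 1) = t ^ (r + 1) - t.
Proof. pose proof (GP_finite t r); lra. Qed.

Lemma scaled_root_bound (l t : R) (n r : nat) :
  0 < l -> (1 <= r)%nat -> (r < n)%nat ->
  t ^ n <= sum_f_R0 (fun j => l ^ j * t ^ j) r -> t <= 1 + Rmax l (l ^ r).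
Proof.
  intros Hl Hr Hrn Hroot; set (c := Rmax l (l ^ r)).
  apply Rnot_lt_le; intros Hbig.
  (* If c < t - 1, the sum is < 1 + (t - 1)(S - 1) = 1 + t^(r+1) - t < t^(r+1) <= t^n. *)
  assert (Ht1 : 1 < t) by (pose proof (Rmax_l l (l ^ r)); unfold c in Hbig; lra).
  pose proof (sum_scaled_pow_le l t c r ltac:(lra)
                (fun j Hj => pow_le_Rmax_first_last l r j Hl Hj)) as Hsum.
  pose proof (geometric_sum_tail t r) as Hgeo.
  set (S := sum_f_R0 (fun j => t ^ j) r) in *.
  assert (Htr : 1 < t ^ r) by (apply Rlt_pow_R1; [lra | lia]).
  assert (Hsucc : t ^ (r + 1) = t * t ^ r) by (rewrite Nat.add_1_r; reflexivity).
  assert (HS : 0 < S - 1).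
  { destruct (Rle_lt_dec (S - 1) 0); [nra | assumption]. }
  assert (c * (S - 1) < (t - 1) * (S - 1)) by (apply Rmult_lt_compat_r; lra).
  assert (t ^ (r + 1) <= t ^ n) by (apply Rle_pow; [lra | lia]).
  lra.
Qed.

Lemma root_bound (l x : R) (n r : nat) :
  0 < l -> (1 <= r)%nat -> (r < n)%nat ->
  x ^ n <= l ^ n * sum_f_R0 (fun j => x ^ j) r ->
  x <= l + Rmax (l ^ 2) (l ^ (r + 1)).
Proof.
  intros Hl Hr Hrn Hroot.
  set (t := x / l).
  assert (Hx : x = l * t) by (unfold t; field; lra).
  assert (Ht : t <= 1 + Rmax l (l ^ r)).
  { apply (scaled_root_bound l t n r Hl Hr Hrn).
    apply (Rmult_le_reg_l (l ^ n)); [apply pow_lt; lra|].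
    rewrite <- Rpow_mult_distr, <- Hx.
    replace (sum_f_R0 (fun j => l ^ j * t ^ j) r) with (sum_f_R0 (fun j => x ^ j) r)
      by (apply sum_eq; intros; rewrite Hx, Rpow_mult_distr; reflexivity).
    exact Hroot. }
  replace (l ^ 2) with (l * l) by ring.
  replace (l ^ (r + 1)) with (l * l ^ r) by (rewrite Nat.add_1_r; reflexivity).
  rewrite RmaxRmult by lra; rewrite Hx.
  apply Rle_trans with (l * (1 + Rmax l (l ^ r))); [apply Rmult_le_compat_l; lra | lra].
Qed.

Theorem theorem4 (n r : nat) (a : nat -> quat) :
  (2 <= n)%nat -> (1 <= r)%nat -> (r <= n - 1)%nat ->
  a r <> qzero ->
  forall q : quat, hpoly n r a q = qzero ->
  qnorm q <= lam n r a + Rmax (lam n r a ^ 2) (lam n r a ^ (r + 1)).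
Proof.
  intros Hn Hr Hrn Har q Hq.
  apply (root_bound _ _ n r (lam_gt0 n r a) Hr ltac:(lia)).
  rewrite lam_pow by (lia || apply maxnorm_gt0, Har).
  apply hpoly_root_norm_le, Hq.
Qed.
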